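(* Under the assumptions of Theorem 2, on every sample path, for every $i\in[n]$ and all phases $j'\ge j\ge\tau_{\text{arm}}$, $$\mu_{B_{j'}^{(i)}}\ \ge\ \mu_{\min S_j^{(i)}}-K\sup_{j''\in\{j,\dots,j'\}}\delta_{j'',1}.$$
   Context: Arms are labeled so $\mu_1\ge\dots\ge\mu_K$, hence $\min W$ is a best arm in $W\subset[K]$. Algorithm (each honest $i$): $A_0=0$, $A_j=\lceil j^\beta\rceil$; phase $j$ = times $A_{j-1}+1..A_j$; active set $S_j^{(i)}$ = size-$S$ sticky set $\hat S^{(i)}$ plus two non-sticky arms; UCB with parameter $\alpha$ over $S_j^{(i)}$; $B_j^{(i)}$ = active arm most played during phase $j$; after receiving recommendation $R_j^{(i)}$, if $R_j^{(i)}\notin S_j^{(i)}$ the new set is $S_{j+1}^{(i)}=\hat S^{(i)}\cup\{U_{j+1}^{(i)},R_j^{(i)}\}$ where $U_{j+1}^{(i)}$ is the more-played (in phase $j$) of the two current non-sticky arms, else $S_{j+1}^{(i)}=S_j^{(i)}$ (in particular $B_j^{(i)}\in S_{j+1}^{(i)}$). Assumptions of Theorem 2: $G_{\text{hon}}$ connected; $[0,1]$ rewards; $\mu_1>\mu_2$; some honest agent has arm 1 sticky; proposed blocking rule with $\theta_j=(j/3)^{\rho_1}$, $\kappa_j=j^{\rho_2}/(K^2S)$, $\beta>1,\eta>1,0<\rho_1\le1/\eta,\alpha>\frac32+\frac1{2\beta}+\frac1{2\rho_1^2},\frac1{2\alpha-3}<\rho_2<\rho_1(\beta-1)$. Definitions: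 $D_j=\big(\frac{A_j-A_{j-1}}{S+2}-1\big)\vee1$, $\delta_{j,1}=\sqrt{4\alpha\log A_j/D_j}$; $\psi=\sqrt{(\rho_2+\beta(2\alpha-1))/(2\alpha\beta)}$; $\delta_{j,2}=\big(\sqrt{\alpha\log(A_{j-1}\vee1)}(\frac{1-\psi}{\sqrt{\kappa_j}}-\frac2{\sqrt{D_j}})\big)\vee0$; $G_\delta(W)=\{w\in W:\mu_w\ge\mu_{\min W}-\delta\}$; $\Xi_j^{(i)}=\{B_j^{(i)}\notin G_{\delta_{j,1}}(S_j^{(i)})\}\cup\{\min_{w\in G_{\delta_{j,2}}(S_j^{(i)})}T_w^{(i)}(A_j)\le\kappa_j\}$ where $T_w^{(i)}(t)$ counts pulls of $w$ by $i$ up to time $t$; $\tau_{\text{arm}}=\inf\{j:\Xi_{j'}^{(i)}\text{ fails }\forall i\in[n],j'\ge j\}$. *)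

From HB Require Import structures.
From mathcomp Require Import all_boot all_order all_algebra.
From mathcomp Require Import all_classical all_reals exp.
Set Implicit Arguments. Unset Strict Implicit. Unset Printing Implicit Defensive.
Import Order.TTheory GRing.Theory Num.Theory.
Local Open Scope ring_scope.

(* Arms are 'I_K, i.e. 0-indexed: the paper's arm k is our arm k-1.
   mu : 'I_K -> R with mu nonincreasing in the index. *)

(* Phase endpoints A_j = ceil (j^beta), A_0 = 0 (powR 0 beta = 0 for beta <> 0). *)
Definition Aph (R : realType) (beta : R) (j : nat) : nat :=
  `|Num.ceil ((j%:R : R) `^ beta)|%N.

Definition Dph (R : realType) (beta : R) (S j : nat) : R :=
  Num.max (((Aph beta j)%:R - (Aph beta j.-1)%:R) / (S.+2)%:R - 1) 1.

Definition delta1 (R : realType) (alpha beta : R) (S j : nat) : R :=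
  Num.sqrt (4 * alpha * ln ((Aph beta j)%:R) / Dph beta S j).

Definition psi (R : realType) (alpha beta rho2 : R) : R :=
  Num.sqrt ((rho2 + beta * (2 * alpha - 1)) / (2 * alpha * beta)).

Definition kappa (R : realType) (rho2 : R) (K S j : nat) : R :=
  (j%:R : R) `^ rho2 / ((K ^ 2)%:R * S%:R).

Definition delta2 (R : realType) (alpha beta rho2 : R) (K S j : nat) : R :=
  Num.max (Num.sqrt (alpha * ln ((maxn (Aph beta j.-1) 1)%:R)) *
           ((1 - psi alpha beta rho2) / Num.sqrt (kappa rho2 K S j)
            - 2 / Num.sqrt (Dph beta S j))) 0.

(* m is the minimum (= best, since mu is nonincreasing) arm of W *)
Definition is_min_arm (K : nat) (W : {set 'I_K}) (m : 'I_K) : bool :=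
  (m \in W) && [forall k in W, (m <= k)%N].

Definition Gset (R : realType) (K : nat) (mu : 'I_K -> R) (delta : R)
    (W : {set 'I_K}) : {set 'I_K} :=
  [set w in W | [forall m, is_min_arm W m ==> (mu m - delta <= mu w)]].

(* number of pulls of arm w by an agent (pull sequence p, times 1,2,...) at
   times s with a < s <= b *)
Definition npulls (K : nat) (p : nat -> 'I_K) (w : 'I_K) (a b : nat) : nat :=
  \sum_(a.+1 <= s < b.+1) (p s == w).

Definition Tcount (K : nat) (p : nat -> 'I_K) (w : 'I_K) (t : nat) : nat :=
  npulls p w 0 t.

(* The event Xi_j^{(i)} for one agent, given its active set S_j, its most
   played arm B_j and its pull sequence p. *)
Definition Xi (R : realType) (K S : nat) (mu : 'I_K -> R) (alpha beta rho2 : R)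
    (Sj : {set 'I_K}) (Bj : 'I_K) (p : nat -> 'I_K) (j : nat) : Prop :=
  (Bj \notin Gset mu (delta1 alpha beta S j) Sj) \/
  (exists2 w, w \in Gset mu (delta2 alpha beta rho2 K S j) Sj &
      (Tcount p w (Aph beta j))%:R <= kappa rho2 K S j).

(* tau_arm = inf { j >= 1 : Xi_{j'}^{(i)} fails for all i and all j' >= j },
   as an option (None = +infinity, i.e. empty set). *)
Definition tau_arm (n : nat) (XiP : 'I_n -> nat -> Prop) : option nat :=
  match pselect (exists j, (fun j => `[< (1 <= j)%N /\
            forall (i : 'I_n) j', (j <= j')%N -> ~ XiP i j' >]) j) with
  | left H => Some (ex_minn H)
  | right _ => None
  end.

(* Sj = hatS :|: [set N1; N2] with non-sticky arms N1, N2; Rj = recommendation;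
   Sj' = S_{j+1}, with new non-sticky arms N1', N2'. *)
Definition phase_update (K : nat) (p : nat -> 'I_K) (a b : nat)
    (hatS : {set 'I_K}) (N1 N2 Bj Rj N1' N2' : 'I_K) : Prop :=
  if Rj \in hatS :|: [set N1; N2] then N1' = N1 /\ N2' = N2
  else
    exists2 U, (U == N1) || (U == N2) &
      [/\ (npulls p N1 a b <= npulls p U a b)%N,
          (npulls p N2 a b <= npulls p U a b)%N,
          (* ties broken consistently with B_j (so that B_j \in S_{j+1}) *)
          ((Bj == N1) || (Bj == N2) -> U = Bj),
          N1' = U & N2' = Rj].

From HB Require Import structures.
From mathcomp Require Import all_boot all_order all_algebra.
From mathcomp Require Import all_classical all_reals exp.
From mathcomp Require Import lra.
Import Order.TTheory GRing.Theory Num.Theory.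
Local Open Scope ring_scope.

(* After tau_arm every most-played arm B_t is delta_{t,1}-close to the best
   arm of S_t, and B_t is still active in phase t+1; hence the mean of the
   best active arm drops by at most D := sup delta_{t,1} per phase.  A walk
   with steps of loss at most D over at most K states ends at most (K-1) D
   below its start: after the last time it is at or above its starting level,
   it moves among the states strictly below that level, a set that omits the
   starting state, and one concludes by induction on the number of states. *)

Lemma last_index_before (p : pred nat) (j j' : nat) :
  (j <= j')%N -> p j -> ~~ p j' ->
  exists2 t, (j <= t < j')%N & p t /\ forall s, (t < s <= j')%N -> ~~ p s.
Proof.
move=> le_jj' pj npj'.
have exP : exists s, (j <= s <= j')%N && p s by exists j; rewrite leqnn le_jj'.
have ubP s : (j <= s <= j')%N && p s -> (s <= j')%N by case/andP=> /andP[].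
case: (ex_maxnP exP ubP) => t /andP[/andP[le_jt le_tj'] pt] t_max.
exists t; last split=> // s /andP[lt_ts le_sj'].
  by rewrite le_jt ltn_neqAle le_tj' andbT; apply: contraNneq npj' => <-.
apply/negP => ps; have := t_max s.
by rewrite ps le_sj' (leq_trans le_jt (ltnW lt_ts)) leqNgt lt_ts => /(_ isT).
Qed.

Section BoundedLossWalk.

Variables (R : realDomainType) (T : finType) (f : T -> R) (v : nat -> T) (D : R).
Hypothesis D_ge0 : 0 <= D.

Lemma walk_loss_le_card (N : nat) (P : {set T}) (j j' : nat) :
  (#|P| <= N.+1)%N -> (j <= j')%N ->
  (forall t, (j <= t <= j')%N -> v t \in P) ->
  (forall t, (j <= t < j')%N -> f (v t) - D <= f (v t.+1)) ->
  f (v j) - N%:R * D <= f (v j').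
Proof.
elim: N P j => [|N IH] P j card_P le_jj' v_in step.
  have [vj vj'] : v j \in P /\ v j' \in P by rewrite !v_in ?leqnn ?le_jj'.
  by rewrite (card_le1_eqP card_P _ _ vj vj') mul0r subr0.
have [up|down] := lerP (f (v j)) (f (v j')).
  by apply: le_trans up; rewrite lerBlDr lerDl mulr_ge0.
have [t /andP[le_jt lt_tj'] [above below]] :=
  @last_index_before (fun s => f (v j) <= f (v s)) j j' le_jj' (lexx _)
    (negbT (lt_geF down)).
pose P' := [set k in P | f k < f (v j)].
have card_P' : (#|P'| <= N.+1)%N.
  have P'_proper : P' \proper P.
    rewrite finset.properEneq; apply/andP; split; last first.
      by apply/fintype.subsetP => k; rewrite inE => /andP[].
    apply: contraTneq isT => P'E.
    suff : v j \in P' by rewrite inE ltxx andbF.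
    by rewrite P'E v_in // leqnn le_jj'.
  by rewrite -ltnS (leq_trans (proper_card P'_proper)).
have tail : f (v t.+1) - N%:R * D <= f (v j').
  apply: IH card_P' lt_tj' _ _ => [s /andP[lt_ts le_sj']|s /andP[lt_ts lt_sj']].
    by rewrite inE v_in ?le_sj' ?(leq_trans le_jt (ltnW lt_ts)) // ltNge below
      ?lt_ts.
  by rewrite step // lt_sj' (leq_trans le_jt (ltnW lt_ts)).
have := step t; rewrite le_jt lt_tj' => /(_ isT) step_t.
by rewrite -natr1 mulrDl mul1r; lra.
Qed.

End BoundedLossWalk.

Lemma tau_armP (n : nat) (XiP : 'I_n -> nat -> Prop) (tau : nat) :
  tau_arm XiP = Some tau ->
  (1 <= tau)%N /\ forall i j, (tau <= j)%N -> ~ XiP i j.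
Proof. by rewrite /tau_arm; case: pselect => // H [<-]; case: ex_minnP => k /asboolP. Qed.

Section MinArm.

Set Implicit Arguments.
Unset Strict Implicit.

Context {K : nat}.
Implicit Types (W : {set 'I_K}) (m k : 'I_K).

Definition min_arm W k0 : 'I_K := [arg min_(k < k0 in W) val k].

Lemma min_armP W k0 : k0 \in W -> is_min_arm W (min_arm W k0).
Proof.
move=> W_k0; rewrite /min_arm; case: arg_minnP => // k W_k k_min.
by rewrite /is_min_arm W_k; apply/forall_inP.
Qed.

Lemma is_min_arm_uniq W m1 m2 : is_min_arm W m1 -> is_min_arm W m2 -> m1 = m2.
Proof.
move=> /andP[W_m1 /forall_inP min1] /andP[W_m2 /forall_inP min2].
by apply/val_inj/eqP; rewrite eqn_leq min1 // min2.
Qed.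

Lemma mu_le_min_arm (R : realDomainType) (mu : 'I_K -> R) W m k :
  (forall k k' : 'I_K, (k <= k')%N -> mu k' <= mu k) ->
  is_min_arm W m -> k \in W -> mu k <= mu m.
Proof. by move=> mu_anti /andP[_ /forall_inP m_min] W_k; apply/mu_anti/m_min. Qed.

Lemma mem_Gset_min_arm (R : realType) (mu : 'I_K -> R) delta W m w :
  w \in Gset mu delta W -> is_min_arm W m -> mu m - delta <= mu w.
Proof. by rewrite inE => /andP[_ /forallP/(_ m)/implyP]. Qed.

Lemma phase_update_mem (p : nat -> 'I_K) (a b : nat) (hatS : {set 'I_K})
    (N1 N2 Bj Rj N1' N2' : 'I_K) :
  Bj \in hatS :|: [set N1; N2] ->
  phase_update p a b hatS N1 N2 Bj Rj N1' N2' ->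
  Bj \in hatS :|: [set N1'; N2'].
Proof.
rewrite /phase_update; case: ifP => _ Bj_act; first by case=> -> ->.
case=> U _ [_ _ U_Bj -> _]; move: Bj_act; rewrite !inE => /orP[->//|Bj_N].
by rewrite (U_Bj Bj_N) eqxx orbT.
Qed.

End MinArm.

Theorem mainTheorem9
  (R : realType) (n K S : nat)
  (* means, labeled so that mu_1 >= ... >= mu_K (0-indexed here) *)
  (mu : 'I_K -> R)
  (* algorithm / blocking-rule parameters *)
  (alpha beta eta rho1 rho2 : R)
  (* a sample path of the honest agents: sticky sets, non-sticky arms of the
     active set in each phase, recommendations, most played arms, pulls *)
  (hatS : 'I_n -> {set 'I_K})
  (N1 N2 : 'I_n -> nat -> 'I_K)
  (Rec : 'I_n -> nat -> 'I_K)
  (B : 'I_n -> nat -> 'I_K)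
  (pull : 'I_n -> nat -> 'I_K) :
  let Sact := fun i j => hatS i :|: [set N1 i j; N2 i j] in
  let A := Aph beta in
  (* assumptions of Theorem 2 *)
  (forall k k' : 'I_K, (k <= k')%N -> mu k' <= mu k) ->
  (forall k, 0 <= mu k <= 1) ->
  (forall k1 k2 : 'I_K, val k1 = 0%N -> val k2 = 1%N -> mu k2 < mu k1) ->
  (exists i : 'I_n, exists2 k : 'I_K, val k = 0%N & k \in hatS i) ->
  1 < beta -> 1 < eta -> 0 < rho1 -> rho1 <= 1 / eta ->
  3 / 2 + 1 / (2 * beta) + 1 / (2 * rho1 ^+ 2) < alpha ->
  1 / (2 * alpha - 3) < rho2 -> rho2 < rho1 * (beta - 1) ->
  (* structure of the algorithm *)
  (forall i, #|hatS i| = S) ->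
  (forall i j, N1 i j != N2 i j) ->
  (forall i j, N1 i j \notin hatS i) ->
  (forall i j, N2 i j \notin hatS i) ->
  (* UCB plays only active arms during each phase *)
  (forall i j t, (1 <= j)%N -> (A j.-1 < t <= A j)%N -> pull i t \in Sact i j) ->
  (* B_j = active arm most played during phase j *)
  (forall i j, (1 <= j)%N -> B i j \in Sact i j) ->
  (forall i j k, (1 <= j)%N -> k \in Sact i j ->
     (npulls (pull i) k (A j.-1) (A j) <= npulls (pull i) (B i j) (A j.-1) (A j))%N) ->
  (* active-set update after the recommendation *)
  (forall i j, (1 <= j)%N ->
     phase_update (pull i) (A j.-1) (A j) (hatS i) (N1 i j) (N2 i j) (B i j) (Rec i j)
       (N1 i j.+1) (N2 i j.+1)) ->
  forall tau, tau_arm (fun i j =>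
      Xi S mu alpha beta rho2 (Sact i j) (B i j) (pull i) j) = Some tau ->
  forall (i : 'I_n) (j j' : nat) (m : 'I_K), (tau <= j)%N -> (j <= j')%N ->
  is_min_arm (Sact i j) m ->
  mu m - K%:R * \big[Num.max/0]_(j <= j'' < j'.+1) delta1 alpha beta S j''
    <= mu (B i j').
Proof.
(* The bound holds pathwise: of the hypotheses of Theorem 2 only the ordering
   of the means, B_j \in S_j and the update rule are needed. *)
move=> Sact A mu_anti _ _ _ _ _ _ _ _ _ _ _ _ _ _ _ B_act _ update
  tau /tau_armP[tau_ge1 Xi_fails] i j j' m tau_j le_jj' m_min.
pose v t := min_arm (Sact i t) (N1 i t).
have v_min t : is_min_arm (Sact i t) (v t) by apply: min_armP; rewrite !inE eqxx orbT.
have B_close t : (tau <= t)%N -> mu (v t) - delta1 alpha beta S t <= mu (B i t).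
  move=> tau_t; apply: mem_Gset_min_arm (v_min t); apply: contraT => B_far.
  by case: (Xi_fails i t tau_t); left.
have B_next t : (tau <= t)%N -> mu (B i t) <= mu (v t.+1).
  move=> tau_t; have t_ge1 := leq_trans tau_ge1 tau_t.
  apply: mu_le_min_arm mu_anti (v_min t.+1) _.
  exact: phase_update_mem (B_act i t t_ge1) (update i t t_ge1).
set D := \big[Num.max/0]_(j <= j'' < j'.+1) delta1 alpha beta S j''.
have delta_le_D t : (j <= t <= j')%N -> delta1 alpha beta S t <= D.
  by move=> jtj'; apply: le_bigmax_seq; rewrite // mem_index_iota ltnS.
have K_gt0 : (0 < K)%N by apply: leq_ltn_trans (ltn_ord m).
have walk : mu (v j) - K.-1%:R * D <= mu (v j').
  apply: (@walk_loss_le_card _ _ _ _ _ _ _ [set: 'I_K]) => //.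
  - exact: bigmax_ge_id.
  - by rewrite cardsT card_ord prednK.
  - move=> t /andP[le_jt lt_tj']; have tau_t := leq_trans tau_j le_jt.
    have := delta_le_D t; rewrite le_jt ltnW // => /(_ isT).
    by have := B_close t tau_t; have := B_next t tau_t; lra.
rewrite (is_min_arm_uniq m_min (v_min j)).
have := delta_le_D j'; rewrite le_jj' leqnn => /(_ isT).
have := B_close j' (leq_trans tau_j le_jj').
by rewrite -(prednK K_gt0) -natr1 mulrDl mul1r; lra.
Qed.
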